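(* The following statements are equivalent: (i) $S$ is nearly epsilon-strongly graded; (ii) for every $g\in G$ the ring $S_{(g,g^{-1})}=S_gS_{g^{-1}}$ is s-unital, and for every graded left $S$-module $M$ and all $g,h\in G$ one has $S_gM_h=S_{(g,g^{-1})}M_{gh}$; (iii) for every $g\in G$ the ring $S_{(g,g^{-1})}$ is s-unital, and for every graded left $S$-module $M$ and all $g,h\in G$ the multiplication map $m_{g,h}:S_g\otimes_R M_h\to S_{(g,g^{-1})}M_{gh}$, $s\otimes m\mapsto sm$, is a well-defined isomorphism of left $R$-modules; (iv) for every $g\in G$ the ring $S_{(g,g^{-1})}$ is s-unital, and the family of multiplication maps $\tau_M:S\otimes_R M_e\to \bigoplus_{g\in G}S_{(g,g^{-1})}M_g$, $s\otimes m\mapsto sm$, indexed by the graded left $S$-modules $M$, is a well-defined natural isomorphism between the functors $S\otimes_R(-)_e$ and $S(\mathrm{id})$ from $S$-gr to $S$-gr.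
   Context: $G$ is a group with identity $e$; $S=\bigoplus_{g\in G}S_g$ is an associative unital ring graded by $G$ ($S_gS_h\subseteq S_{gh}$), $R=S_e$, and $XY$ denotes the set of finite sums of products $xy$, $x\in X$, $y\in Y$. $S$-gr is the category of graded left $S$-modules $M=\bigoplus_g M_g$ ($S_gM_h\subseteq M_{gh}$) with degree-preserving $S$-linear maps. For a ring $A$, a left $A$-module $M$ is s-unital if for every $m\in M$ there is $a\in A$ with $am=m$; right s-unital analogously; an $(A,B)$-bimodule is s-unital if it is left s-unital over $A$ and right s-unital over $B$; a ring is s-unital if it is s-unital as a left and as a right module over itself. $S$ is nearly epsilon-strongly graded if for each $g\in G$, $S_g$ is an s-unital $(S_gS_{g^{-1}},S_{g^{-1}}S_g)$-bimodule. For $M$ in $S$-gr, $M_e$ is a left $R$-module and $S\otimes_R M_e$ is graded by $(S\otimes_R M_e)_g=S_g\otimes_R M_e$; the functor $(-)_e$ sends $M$ to $M_e$. $S(\mathrm{id})$ is the functor $S$-gr$\to S$-gr sending $M$ to its graded submodule $S(M)=\bigoplus_{g\in G}S_gS_{g^{-1}}M_g$ (and morphisms to their restrictions). *)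

From HB Require Import structures.
From mathcomp Require Import all_boot all_algebra.
From Stdlib Require List.
Set Implicit Arguments. Unset Strict Implicit. Unset Printing Implicit Defensive.
Import GRing.Theory.
Local Open Scope ring_scope.

Record group := Group {
  gcarrier :> Type;
  gmul : gcarrier -> gcarrier -> gcarrier;
  ginv : gcarrier -> gcarrier;
  gunit : gcarrier;
  gmulA : forall x y z, gmul x (gmul y z) = gmul (gmul x y) z;
  gmul1 : forall x, gmul x gunit = x;
  g1mul : forall x, gmul gunit x = x;
  gmulV : forall x, gmul x (ginv x) = gunit;
  gVmul : forall x, gmul (ginv x) x = gunit }.

Definition prodset (A B : Type) (V : nmodType) (f : A -> B -> V)
    (X : A -> Prop) (Y : B -> Prop) : V -> Prop :=
  fun z => exists l : seq (A * B),
    List.Forall (fun p => X p.1 /\ Y p.2) l /\ z = \sum_(p <- l) f p.1 p.2.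

Definition add_subgroup (V : zmodType) (X : V -> Prop) : Prop :=
  X 0 /\ forall x y, X x -> X y -> X (x - y).

Definition internal_direct_sum (G : Type) (V : zmodType) (X : G -> V -> Prop)
  : Prop :=
  (forall g, add_subgroup (X g)) /\
  (forall v : V, exists l : seq (G * V),
      List.Forall (fun p => X p.1 p.2) l /\ v = \sum_(p <- l) p.2) /\
  (forall l : seq (G * V), List.NoDup (map fst l) ->
      List.Forall (fun p => X p.1 p.2) l -> \sum_(p <- l) p.2 = 0 ->
      List.Forall (fun p => p.2 = 0) l).

Definition graded_ring (G : group) (S : pzRingType) (Sg : G -> S -> Prop) : Prop :=
  internal_direct_sum Sg /\
  (forall g h x y, Sg g x -> Sg h y -> Sg (gmul g h) (x * y)).

Definition graded_module (G : group) (S : pzRingType) (Sg : G -> S -> Prop)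
    (M : lmodType S) (Mg : G -> M -> Prop) : Prop :=
  internal_direct_sum Mg /\
  (forall g h x m, Sg g x -> Mg h m -> Mg (gmul g h) (x *: m)).

Definition Sgg (G : group) (S : pzRingType) (Sg : G -> S -> Prop) (g : G)
  : S -> Prop := prodset *%R (Sg g) (Sg (ginv g)).

(* s-unital ring (given as a subset T of S closed under the ring operations) *)
Definition s_unital_ring (S : pzRingType) (T : S -> Prop) : Prop :=
  forall x, T x -> (exists a, T a /\ a * x = x) /\ (exists b, T b /\ x * b = x).

Definition nearly_eps_strongly (G : group) (S : pzRingType) (Sg : G -> S -> Prop)
  : Prop :=
  forall g s, Sg g s ->
    (exists a, prodset *%R (Sg g) (Sg (ginv g)) a /\ a * s = s) /\
    (exists b, prodset *%R (Sg (ginv g)) (Sg g) b /\ s * b = s).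

(* ---------- Tensor products X (x)_R Y, literally as a quotient of the
   free abelian group on X x Y by the bi-additivity / R-balancedness
   relations.  Formal Z-combinations are lists of (coefficient, pair). ---------- *)
Definition fcoef (S : pzRingType) (M : lmodType S)
    (c : seq (int * (S * M))) (p : S * M) : int :=
  \sum_(q <- c | q.2 == p) q.1.

Definition tensor_relation (S : pzRingType) (M : lmodType S)
    (X : S -> Prop) (Y : M -> Prop) (R : S -> Prop)
    (c : seq (int * (S * M))) : Prop :=
  (exists s s' m, X s /\ X s' /\ Y m /\
     c = [:: (1%:Z, (s + s', m)); ((-1)%:~R, (s, m)); ((-1)%:~R, (s', m))]) \/
  (exists s m m', X s /\ Y m /\ Y m' /\
     c = [:: (1%:Z, (s, m + m')); ((-1)%:~R, (s, m)); ((-1)%:~R, (s, m'))]) \/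
  (exists s r m, X s /\ R r /\ Y m /\
     c = [:: (1%:Z, (s * r, m)); ((-1)%:~R, (s, r *: m))]).

(* the element sum_i s_i (x) m_i of X (x)_R Y is zero *)
Definition tensor_zero (S : pzRingType) (M : lmodType S)
    (X : S -> Prop) (Y : M -> Prop) (R : S -> Prop) (l : seq (S * M)) : Prop :=
  exists rels : seq (int * seq (int * (S * M))),
    List.Forall (fun r => tensor_relation X Y R r.2) rels /\
    forall p, fcoef (map (fun q => (1%:Z, q)) l) p
              = \sum_(r <- rels) r.1 * fcoef r.2 p.

Definition cond_ii (G : group) (S : pzRingType) (Sg : G -> S -> Prop) : Prop :=
  (forall g, s_unital_ring (Sgg Sg g)) /\
  forall (M : lmodType S) (Mg : G -> M -> Prop), graded_module Sg Mg ->
    forall g h (z : M),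
      prodset *:%R (Sg g) (Mg h) z <-> prodset *:%R (Sgg Sg g) (Mg (gmul g h)) z.

(* m_{g,h} : S_g (x)_R M_h -> S_(g,g^-1) M_(gh), s (x) m |-> s m,
   is well defined (lands in the target) and bijective *)
Definition mult_map_iso (G : group) (S : pzRingType) (Sg : G -> S -> Prop)
    (M : lmodType S) (Mg : G -> M -> Prop) (g h : G) : Prop :=
  (forall s m, Sg g s -> Mg h m -> prodset *:%R (Sgg Sg g) (Mg (gmul g h)) (s *: m)) /\
  (forall z, prodset *:%R (Sgg Sg g) (Mg (gmul g h)) z ->
     exists l : seq (S * M), List.Forall (fun p => Sg g p.1 /\ Mg h p.2) l /\
                             z = \sum_(p <- l) p.1 *: p.2) /\
  (forall l : seq (S * M), List.Forall (fun p => Sg g p.1 /\ Mg h p.2) l ->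
     \sum_(p <- l) p.1 *: p.2 = 0 -> tensor_zero (Sg g) (Mg h) (Sg (gunit G)) l).

Definition cond_iii (G : group) (S : pzRingType) (Sg : G -> S -> Prop) : Prop :=
  (forall g, s_unital_ring (Sgg Sg g)) /\
  forall (M : lmodType S) (Mg : G -> M -> Prop), graded_module Sg Mg ->
    forall g h, mult_map_iso Sg Mg g h.

Definition SM (G : group) (S : pzRingType) (Sg : G -> S -> Prop)
    (M : lmodType S) (Mg : G -> M -> Prop) : M -> Prop :=
  fun z => exists l : seq (G * M),
    List.Forall (fun p => prodset *:%R (Sgg Sg p.1) (Mg p.1) p.2) l /\
    z = \sum_(p <- l) p.2.

(* tau_M : S (x)_R M_e -> S(M), s (x) m |-> s m : a well-defined isomorphism
   of graded S-modules (degree g part S_g (x) M_e goes to S_(g,g^-1) M_g) *)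
Definition tau_iso (G : group) (S : pzRingType) (Sg : G -> S -> Prop)
    (M : lmodType S) (Mg : G -> M -> Prop) : Prop :=
  (forall g s m, Sg g s -> Mg (gunit G) m -> prodset *:%R (Sgg Sg g) (Mg g) (s *: m)) /\
  (forall z, SM Sg Mg z ->
     exists l : seq (S * M), List.Forall (fun p => Mg (gunit G) p.2) l /\
                             z = \sum_(p <- l) p.1 *: p.2) /\
  (forall l : seq (S * M), List.Forall (fun p => Mg (gunit G) p.2) l ->
     \sum_(p <- l) p.1 *: p.2 = 0 ->
     tensor_zero (fun _ => True) (Mg (gunit G)) (Sg (gunit G)) l).

Definition cond_iv (G : group) (S : pzRingType) (Sg : G -> S -> Prop) : Prop :=
  (forall g, s_unital_ring (Sgg Sg g)) /\
  (forall (M : lmodType S) (Mg : G -> M -> Prop), graded_module Sg Mg ->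
     tau_iso Sg Mg) /\
  (* naturality: for a morphism f : M -> N in S-gr,
     tau_N o (S (x) f_e) = S(f) o tau_M *)
  (forall (M N : lmodType S) (Mg : G -> M -> Prop) (Ng : G -> N -> Prop),
     graded_module Sg Mg -> graded_module Sg Ng ->
     forall f : {linear M -> N}, (forall g m, Mg g m -> Ng g (f m)) ->
     forall l : seq (S * M), List.Forall (fun p => Mg (gunit G) p.2) l ->
       f (\sum_(p <- l) p.1 *: p.2) = \sum_(p <- l) p.1 *: f p.2).

From HB Require Import structures.
From mathcomp Require Import all_boot all_algebra.
From Stdlib Require Import ClassicalEpsilon.
From Stdlib Require List.
Set Implicit Arguments. Unset Strict Implicit. Unset Printing Implicit Defensive.
Import GRing.Theory.
Local Open Scope ring_scope.

(* In a ring without identity T acting on an additive group P,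
     if every element of P has a one-sided unit in T, then so does every finite
     family ([common_left_unit]).  Under (i) this gives common units in
     S_(g,g^-1) for finite families in S_g and S_(g^-1), hence s-unitality of
     S_(g,g^-1); conversely s-unitality plus S_g = S_(g,g^-1) S_g gives (i)
     ([to_nearly_eps]), and (ii) and (iv) applied to M = S give exactly that.
   - Tensor products.  If
     sum s_i m_i = 0 with s_i in S_g and a = sum_j x_j y_j is a common left unit
     of the s_i, then sum s_i (x) m_i = sum_j x_j (x) y_j (sum_i s_i m_i) = 0,
     so the multiplication maps m_(g,h) are injective ([mult_map_kernel]).
     For tau one first splits S (x)_R M_e into its homogeneous parts, which
     are separated by the directness of the sum of the S_g M_e. *)

Lemma ginvK (G : group) (g : G) : ginv (ginv g) = g.
Proof. by rewrite -[ginv (ginv g)]gmul1 -(gVmul g) gmulA gVmul g1mul. Qed.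

Lemma gmul_fix_unit (G : group) (h x : G) : gmul h x = h -> x = gunit G.
Proof. by move=> hx; rewrite -(g1mul x) -(gVmul h) -gmulA hx gVmul. Qed.

(* A classical equality test on an arbitrary type; it lets us split a finite
   family of homogeneous elements according to their degrees. *)
Definition ceq (T : Type) (x y : T) : bool :=
  if excluded_middle_informative (x = y) then true else false.

Lemma ceqP (T : Type) (x y : T) : reflect (x = y) (ceq x y).
Proof. by rewrite /ceq; case: excluded_middle_informative => h; constructor. Qed.

Lemma In_filter (T : Type) (a : pred T) (s : seq T) x :
  List.In x (filter a s) <-> List.In x s /\ a x.
Proof.
elim: s => [|y s IH] /=; first by split=> [[]|[[]]].
case ay: (a y) => /=; rewrite IH; split.
- by case=> [<-|[]]; auto.
- by case=> [[<-|H] ax]; auto.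
- by case=> H; split; auto.
- by case=> [[E|H] ax]; [rewrite E ax in ay|]; auto.
Qed.

Lemma ForallE (T : Type) (P : T -> Prop) l :
  List.Forall P l -> forall x, List.In x l -> P x.
Proof. by move/List.Forall_forall. Qed.

Lemma ForallI (T : Type) (P : T -> Prop) l :
  (forall x, List.In x l -> P x) -> List.Forall P l.
Proof. by move/List.Forall_forall. Qed.

Lemma In_map (A B : Type) (f : A -> B) l y :
  List.In y (map f l) <-> exists x, f x = y /\ List.In x l.
Proof.
elim: l y => [|x l IH] y /=; first by split=> [[]|[x [_ []]]].
split=> [[<-|Hy]|[z [<- [->|Hz]]]]; [by exists x; auto| |by left|].
  by have [z [<- Hz]] := (IH y).1 Hy; exists z; auto.
by right; apply/IH; exists z.
Qed.

Lemma Forall_map (A B : Type) (f : A -> B) (P : B -> Prop) l :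
  List.Forall P (map f l) <-> List.Forall (fun x => P (f x)) l.
Proof.
elim: l => [|x l IH] /=; first by split=> _; constructor.
by split=> /List.Forall_cons_iff [Hx /IH Hl]; constructor.
Qed.

Lemma sum_closed (T : Type) (V : nmodType) (P : V -> Prop) (F : T -> V) l :
  P 0 -> (forall u v, P u -> P v -> P (u + v)) ->
  (forall x, List.In x l -> P (F x)) -> P (\sum_(x <- l) F x).
Proof.
move=> P0 PD; elim: l => [|x l IH] H; first by rewrite big_nil.
by rewrite big_cons; apply: PD; [apply: H; left|apply: IH => y Hy; apply: H; right].
Qed.

Section Prodset.
Variables (A B : Type) (V : nmodType) (f : A -> B -> V) (X : A -> Prop) (Y : B -> Prop).

Lemma prodset_ind (P : V -> Prop) : P 0 -> (forall u v, P u -> P v -> P (u + v)) ->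
  (forall a b, X a -> Y b -> P (f a b)) -> forall z, prodset f X Y z -> P z.
Proof.
move=> P0 PD Pf z [l [Hl ->]]; apply: sum_closed => // p Hp.
by have [] := ForallE Hl Hp; apply: Pf.
Qed.

Lemma prodset0 : prodset f X Y 0.
Proof. by exists [::]; rewrite big_nil. Qed.

Lemma prodsetD u v : prodset f X Y u -> prodset f X Y v -> prodset f X Y (u + v).
Proof.
move=> [l1 [H1 ->]] [l2 [H2 ->]]; exists (l1 ++ l2).
by split; [apply/List.Forall_app|rewrite big_cat].
Qed.

Lemma prodset1 a b : X a -> Y b -> prodset f X Y (f a b).
Proof. by move=> Ha Hb; exists [:: (a, b)]; split; [constructor|rewrite big_seq1]. Qed.

End Prodset.

Lemma prodset_assoc (S : pzRingType) (X Y Z : S -> Prop) z :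
  prodset *%R (prodset *%R X Y) Z z -> prodset *%R X (prodset *%R Y Z) z.
Proof.
apply: prodset_ind; [exact: prodset0|exact: prodsetD|].
move=> a c Ha Hc; move: a Ha; apply: prodset_ind.
- by rewrite mul0r; apply: prodset0.
- by move=> u v Hu Hv; rewrite mulrDl; apply: prodsetD.
- by move=> x y Hx Hy; rewrite -mulrA; apply: prodset1 => //; apply: prodset1.
Qed.

Section AddSubgroup.
Variables (V : zmodType) (X : V -> Prop).
Hypothesis hX : add_subgroup X.

Lemma asg0 : X 0. Proof. exact: hX.1. Qed.
Lemma asgB x y : X x -> X y -> X (x - y). Proof. exact: hX.2. Qed.
Lemma asgN x : X x -> X (- x).
Proof. by move=> Hx; rewrite -sub0r; apply: asgB => //; apply: asg0. Qed.
Lemma asgD x y : X x -> X y -> X (x + y).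
Proof. by move=> Hx Hy; rewrite -[y]opprK; apply: asgB => //; apply: asgN. Qed.
Lemma asg_sum (T : Type) (F : T -> V) l :
  (forall x, List.In x l -> X (F x)) -> X (\sum_(x <- l) F x).
Proof. by apply: sum_closed; [apply: asg0|apply: asgD]. Qed.

End AddSubgroup.

Lemma prodset_add_subgroup (S : pzRingType) (X Y : S -> Prop) :
  add_subgroup Y -> add_subgroup (prodset *%R X Y).
Proof.
move=> hY; split; first exact: prodset0.
have HN z : prodset *%R X Y z -> prodset *%R X Y (- z).
  apply: (prodset_ind (P := fun z => prodset *%R X Y (- z))).
  - by rewrite oppr0; apply: prodset0.
  - by move=> u v Hu Hv; rewrite opprD; apply: prodsetD.
  - by move=> a b Ha Hb; rewrite -mulrN; apply: prodset1 => //; apply: asgN.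
by move=> x y Hx Hy; apply: prodsetD => //; apply: HN.
Qed.

Section DirectSum.
Variables (I : Type) (V : zmodType) (X : I -> V -> Prop).
Hypothesis hI : internal_direct_sum X.

Let homog (p : I * V) := X p.1 p.2.

Lemma ids_merge (l : seq (I * V)) : List.Forall homog l ->
  exists l', [/\ List.NoDup (map fst l'), List.Forall homog l',
     \sum_(p <- l') p.2 = \sum_(p <- l) p.2 &
     forall k, List.In k (map fst l') -> List.In k (map fst l)].
Proof.
have [n] := ubnP (size l); elim: n l => // n IH [|[k0 v0] t] /= Hs HF.
  by exists [::]; split; [constructor|constructor|rewrite !big_nil|].
move/List.Forall_cons_iff: HF => [Hk0 HF].
pose P := fun p : I * V => ceq p.1 k0.
have Hsz : (size (filter (predC P) t) < n)%N.
  by rewrite size_filter (leq_ltn_trans (count_size _ _)).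
have HFt : List.Forall homog (filter (predC P) t).
  by apply: ForallI => x /In_filter [Hx _]; exact: ForallE HF x Hx.
have [lB [ND FB SB KB]] := IH _ Hsz HFt.
exists ((k0, v0 + \sum_(p <- filter P t) p.2) :: lB); split.
- constructor => // Hin; have := KB _ Hin; case/In_map => p [E /In_filter [_]].
  by rewrite /= /P E; case: ceqP.
- constructor => //; apply: (asgD (hI.1 k0)) => //; apply: (asg_sum (hI.1 k0)) => p.
  by case/In_filter => Hp; rewrite /P; case: ceqP => // <- _; exact: ForallE HF p Hp.
- rewrite !big_cons SB -addrA; congr (_ + _).
  by rewrite [RHS](bigID P) /= !big_filter.
- move=> k /= [<-|Hk]; first by left.
  right; have := KB _ Hk; case/In_map => p [E /In_filter [Hp _]].
  by apply/In_map; exists p.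
Qed.

Lemma ids_unique k x (l : seq (I * V)) :
  X k x -> List.Forall (fun p => X p.1 p.2 /\ p.1 <> k) l ->
  x + \sum_(p <- l) p.2 = 0 -> x = 0.
Proof.
move=> Hx Hl Hs.
have [l' [ND F' S' K']] := ids_merge (List.Forall_impl _ (fun p H => proj1 H) Hl).
have ND' : List.NoDup (map fst ((k, x) :: l')).
  constructor => // Hin; have := K' _ Hin; case/In_map => p [E Hp].
  by have := (ForallE Hl Hp).2.
have := hI.2.2 ((k, x) :: l') ND' (List.Forall_cons (k, x) Hx F').
by rewrite big_cons S' => /(_ Hs) /List.Forall_cons_iff [].
Qed.

Lemma ids_component0 k (l : seq (I * V)) : List.Forall homog l ->
  \sum_(p <- l) p.2 = 0 -> \sum_(p <- l | ceq p.1 k) p.2 = 0.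
Proof.
move=> Hl Hs; apply: (ids_unique (l := filter (fun p => ~~ ceq p.1 k) l)).
- rewrite -big_filter; apply: (asg_sum (hI.1 k)) => p.
  by case/In_filter => Hp; case: ceqP => // <- _; exact: ForallE Hl p Hp.
- apply: ForallI => p /In_filter [Hp Hk]; split; first exact: ForallE Hl p Hp.
  by move: Hk; case: ceqP.
- by rewrite !big_filter -[RHS]Hs [in RHS](bigID (fun p => ceq p.1 k)).
Qed.

End DirectSum.

Definition rng_closed (S : pzRingType) (T : S -> Prop) : Prop :=
  add_subgroup T /\ forall x y, T x -> T y -> T (x * y).

Section LocalUnits.
Variables (S : pzRingType) (T P : S -> Prop).
Hypotheses (rT : rng_closed T) (aP : add_subgroup P).

(* If every element of the left T-module P has a left unit in T, then every
   finite family in P has a common left unit in T: from a unit a1 of the tail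
   and a unit a2 of s - a1 s, the element a1 + a2 - a2 a1 works for s too. *)
Lemma common_left_unit : (forall a s, T a -> P s -> P (a * s)) ->
  (forall s, P s -> exists a, T a /\ a * s = s) ->
  forall l, List.Forall P l -> exists a, T a /\ List.Forall (fun s => a * s = s) l.
Proof.
move=> TP U; elim=> [|s l IH]; first by exists 0; split => //; apply: asg0 rT.1.
move=> /List.Forall_cons_iff [Ps /IH [a1 [T1 H1]]].
have [a2 [T2 H2]] := U _ (asgB aP Ps (TP _ _ T1 Ps)).
have T12 : T (a1 + a2 - a2 * a1).
  by apply: (asgB rT.1); [apply: (asgD rT.1)|apply: rT.2].
exists (a1 + a2 - a2 * a1); split => //; constructor.
  by rewrite mulrBl mulrDl -mulrA -addrA -mulrBr H2 addrC subrK.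
by apply: List.Forall_impl H1 => x Hx; rewrite mulrBl mulrDl -mulrA Hx addrK.
Qed.

End LocalUnits.

(* The right-handed version, obtained in the converse ring. *)
Lemma common_right_unit (S : pzRingType) (T P : S -> Prop) :
  rng_closed T -> add_subgroup P -> (forall a s, T a -> P s -> P (s * a)) ->
  (forall s, P s -> exists a, T a /\ s * a = s) ->
  forall l, List.Forall P l -> exists a, T a /\ List.Forall (fun s => s * a = s) l.
Proof.
move=> [aT mT] aP; apply: (@common_left_unit (S^c)%R T P) => //.
by split => // x y Tx Ty; apply: mT.
Qed.

Lemma prodset_left_unit (S : pzRingType) (T X Y : S -> Prop) :
  (forall l, List.Forall X l -> exists a, T a /\ List.Forall (fun s => a * s = s) l) ->
  forall z, prodset *%R X Y z -> exists a, T a /\ a * z = z.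
Proof.
move=> U z [L [HL ->]].
have [|a [Ta /Forall_map Ha]] := U (map fst L).
  by apply/Forall_map; apply: List.Forall_impl HL => p [].
exists a; split => //; elim: L {HL} Ha => [|p L IH]; first by rewrite big_nil mulr0.
by move=> /List.Forall_cons_iff [Hp HL]; rewrite !big_cons mulrDr mulrA Hp IH.
Qed.

Lemma prodset_right_unit (S : pzRingType) (T X Y : S -> Prop) :
  (forall l, List.Forall Y l -> exists a, T a /\ List.Forall (fun s => s * a = s) l) ->
  forall z, prodset *%R X Y z -> exists a, T a /\ z * a = z.
Proof.
move=> U z [L [HL ->]].
have [|a [Ta /Forall_map Ha]] := U (map snd L).
  by apply/Forall_map; apply: List.Forall_impl HL => p [].
exists a; split => //; elim: L {HL} Ha => [|p L IH]; first by rewrite big_nil mul0r.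
by move=> /List.Forall_cons_iff [Hp HL]; rewrite !big_cons mulrDl -mulrA Hp IH.
Qed.

Lemma s_unital_common_left (S : pzRingType) (T : S -> Prop) :
  rng_closed T -> s_unital_ring T ->
  forall l, List.Forall T l -> exists a, T a /\ List.Forall (fun s => a * s = s) l.
Proof. by move=> rT sT; apply: (common_left_unit rT rT.1 rT.2) => s /sT []. Qed.

Lemma s_unital_common_right (S : pzRingType) (T : S -> Prop) :
  rng_closed T -> s_unital_ring T ->
  forall l, List.Forall T l -> exists a, T a /\ List.Forall (fun s => s * a = s) l.
Proof.
move=> rT sT; apply: (common_right_unit rT rT.1) => [a s Ta Ts|s /sT [] //].
exact: rT.2.
Qed.

Section GradedRing.
Variables (G : group) (S : pzRingType) (Sg : G -> S -> Prop).
Hypothesis gradedS : graded_ring Sg.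

Let SgA g : add_subgroup (Sg g) := gradedS.1.1 g.
Let SgM g h x y : Sg g x -> Sg h y -> Sg (gmul g h) (x * y) := @gradedS.2 g h x y.

(* Write 1 = a + b with a its
   e-component; for s in S_h, s = s a + s b compares components of degree h
   and of degrees h k (k <> e), forcing s b = 0; hence b = 1 b = 0. *)
Lemma one_homog : Sg (gunit G) 1.
Proof.
have [l [Hl E1]] := gradedS.1.2.1 1.
pose P := fun p : G * S => ceq p.1 (gunit G).
set a := \sum_(p <- filter P l) p.2.
set b := \sum_(p <- filter (predC P) l) p.2.
have Ha : Sg (gunit G) a.
  apply: (asg_sum (SgA _)) => p /In_filter [Hp].
  by rewrite /P; case: ceqP => // <- _; exact: ForallE Hl p Hp.
have Eab : 1 = a + b by rewrite E1 /a /b [LHS](bigID P) /= !big_filter.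
have sb0 h s : Sg h s -> s * b = 0.
  move=> Hs; set L := map (fun p => (gmul h p.1, s * p.2)) (filter (predC P) l).
  have Hsum : (s * a - s) + \sum_(p <- L) p.2 = 0.
    by rewrite big_map -!mulr_sumr -/b addrAC -mulrDr -Eab mulr1 subrr.
  have Hsa : Sg h (s * a - s).
    by apply: (asgB (SgA _)) => //; rewrite -[h in Sg h _]gmul1; exact: SgM.
  have HL : List.Forall (fun p => Sg p.1 p.2 /\ p.1 <> h) L.
    apply: ForallI => q /In_map [p [<- /In_filter [Hp HP]]] /=.
    split; first by apply: SgM => //; exact: ForallE Hl p Hp.
    by move/gmul_fix_unit => E; move: HP; rewrite /= /P E; case: ceqP.
  by move: (Hsum); rewrite (ids_unique gradedS.1 Hsa HL Hsum) add0r big_map -mulr_sumr.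
have b0 : b = 0.
  rewrite -[b]mul1r E1 mulr_suml; apply: (@sum_closed _ _ (fun x => x = 0)) => //.
  - by move=> u v -> ->; rewrite addr0.
  - by move=> p Hp; exact: sb0 _ _ (ForallE Hl Hp).
by rewrite Eab b0 addr0.
Qed.

Lemma graded_self : graded_module (M := S^o) Sg Sg.
Proof. by split; [exact: gradedS.1|exact: gradedS.2]. Qed.

Lemma prodset_mull u v w z s : gmul u (gmul v w) = w ->
  prodset *%R (Sg u) (Sg v) z -> Sg w s -> Sg w (z * s).
Proof.
move=> E Hz Hs; move: z Hz; apply: (prodset_ind (P := fun z => Sg w (z * s))).
- by rewrite mul0r; apply: asg0.
- by move=> a b Ha Hb; rewrite mulrDl; apply: asgD.
- by move=> x y Hx Hy; rewrite -mulrA -E; apply: SgM => //; apply: SgM.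
Qed.

Lemma prodset_mulr u v w z s : gmul (gmul w u) v = w ->
  prodset *%R (Sg u) (Sg v) z -> Sg w s -> Sg w (s * z).
Proof.
move=> E Hz Hs; move: z Hz; apply: (prodset_ind (P := fun z => Sg w (s * z))).
- by rewrite mulr0; apply: asg0.
- by move=> a b Ha Hb; rewrite mulrDr; apply: asgD.
- by move=> x y Hx Hy; rewrite mulrA -E; apply: SgM => //; apply: SgM.
Qed.

Lemma Sgg_mull g z s : Sgg Sg g z -> Sg g s -> Sg g (z * s).
Proof. by apply: prodset_mull; rewrite gVmul gmul1. Qed.

Lemma Sgg_mulr g z s : Sgg Sg g z -> Sg (ginv g) s -> Sg (ginv g) (s * z).
Proof. by apply: prodset_mulr; rewrite gVmul g1mul. Qed.

Lemma Sgg_rng_closed g : rng_closed (Sgg Sg g).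
Proof.
split; first exact: prodset_add_subgroup.
move=> z w Hz; apply: (prodset_ind (P := fun w => Sgg Sg g (z * w))).
- by rewrite mulr0; apply: prodset0.
- by move=> u v Hu Hv; rewrite mulrDr; apply: prodsetD.
- by move=> x y Hx Hy; rewrite mulrA; apply: prodset1 => //; apply: Sgg_mull.
Qed.

Section NearlyEpsilon.
Hypothesis Hi : nearly_eps_strongly Sg.

Lemma homog_left_unit g l : List.Forall (Sg g) l ->
  exists a, Sgg Sg g a /\ List.Forall (fun s => a * s = s) l.
Proof.
apply: (common_left_unit (Sgg_rng_closed g) (SgA g)) => [a s|s Hs].
  exact: Sgg_mull.
by have [] := Hi Hs.
Qed.

Lemma homog_right_unit g l : List.Forall (Sg (ginv g)) l ->
  exists a, Sgg Sg g a /\ List.Forall (fun s => s * a = s) l.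
Proof.
apply: (common_right_unit (Sgg_rng_closed g) (SgA _)) => [a s|s Hs].
  by move=> Ha Hs; exact: Sgg_mulr.
by have := (Hi Hs).2; rewrite ginvK.
Qed.

Lemma i_s_unital g : s_unital_ring (Sgg Sg g).
Proof.
move=> x Hx; split.
- exact: prodset_left_unit (homog_left_unit (g := g)) _ Hx.
- exact: prodset_right_unit (homog_right_unit (g := g)) _ Hx.
Qed.

End NearlyEpsilon.

(* Conversely, (i) follows from s-unitality of the S_(g,g^-1) together with
   S_g = S_(g,g^-1) S_g: a left unit comes from the S_(g,g^-1) factors, a
   right unit from the S_(g^-1,g) factors of S_g (S_(g^-1) S_g). *)
Lemma to_nearly_eps : (forall g, s_unital_ring (Sgg Sg g)) ->
  (forall g s, Sg g s -> prodset *%R (Sgg Sg g) (Sg g) s) -> nearly_eps_strongly Sg.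
Proof.
move=> sU H g s Hs; split.
  apply: (prodset_left_unit _ (H g s Hs)).
  exact: s_unital_common_left (Sgg_rng_closed g) (sU g).
have E : prodset *%R (Sg (ginv g)) (Sg g) = Sgg Sg (ginv g) by rewrite /Sgg ginvK.
have := prodset_assoc (H g s Hs); rewrite E; apply: prodset_right_unit.
exact: s_unital_common_right (Sgg_rng_closed _) (sU _).
Qed.

End GradedRing.

Section FormalSums.
Variables (S : pzRingType) (M : lmodType S).

(* A list l of pairs stands for the formal sum of its elements s (x) m;
   occ l p is the coefficient of the pair p in it. *)
Definition occ (l : seq (S * M)) (p : S * M) : int :=
  fcoef (map (fun q => (1%:Z, q)) l) p.

Lemma fcoef_cons (q : int * (S * M)) c p :
  fcoef (q :: c) p = (if q.2 == p then q.1 else 0) + fcoef c p.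
Proof. by rewrite /fcoef big_cons; case: ifP => _; rewrite ?add0r. Qed.

Lemma fcoef_nil p : fcoef (S := S) (M := M) [::] p = 0.
Proof. by rewrite /fcoef big_nil. Qed.

Lemma occ_cons q l p : occ (q :: l) p = (q == p)%:Z + occ l p.
Proof. by rewrite /occ /= fcoef_cons; case: (q == p). Qed.

Lemma occ_nil p : occ [::] p = 0.
Proof. exact: fcoef_nil. Qed.

Lemma occ_cat l1 l2 p : occ (l1 ++ l2) p = occ l1 p + occ l2 p.
Proof. by rewrite /occ /fcoef map_cat big_cat. Qed.

Lemma occ_flatten (A : Type) (F : A -> seq (S * M)) L p :
  occ (flatten (map F L)) p = \sum_(a <- L) occ (F a) p.
Proof. by elim: L => [|a L IH]; rewrite ?big_nil ?occ_nil //= occ_cat IH big_cons. Qed.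

Lemma occ_map (B : Type) (h : B -> S * M) L p :
  occ (map h L) p = \sum_(b <- L) (h b == p)%:Z.
Proof. by elim: L => [|a L IH]; rewrite ?big_nil ?occ_nil //= occ_cons IH big_cons. Qed.

Lemma occ_swap (A B : Type) (f : A -> B -> S * M) LA LB p :
  occ (flatten (map (fun a => map (f a) LB) LA)) p =
  occ (flatten (map (fun b => map (f^~ b) LA) LB)) p.
Proof.
rewrite !occ_flatten; under eq_bigr do rewrite occ_map.
by under [RHS]eq_bigr do rewrite occ_map; exact: exchange_big.
Qed.

Variables (X : S -> Prop) (Y : M -> Prop) (R : S -> Prop).

Definition relcomb (f : S * M -> int) : Prop :=
  exists rels : seq (int * seq (int * (S * M))),
    List.Forall (fun r => tensor_relation X Y R r.2) rels /\
    forall p, f p = \sum_(r <- rels) r.1 * fcoef r.2 p.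

Lemma relcomb_ext f g : (forall p, f p = g p) -> relcomb f -> relcomb g.
Proof. by move=> E [rels [H1 H2]]; exists rels; split => // p; rewrite -E. Qed.

Lemma relcomb0 : relcomb (fun _ => 0).
Proof. by exists [::]; split => // p; rewrite big_nil. Qed.

Lemma relcombD f g : relcomb f -> relcomb g -> relcomb (fun p => f p + g p).
Proof.
move=> [r1 [H1 E1]] [r2 [H2 E2]]; exists (r1 ++ r2).
by split=> [|p]; [apply/List.Forall_app|rewrite big_cat E1 E2].
Qed.

Lemma relcombN f : relcomb f -> relcomb (fun p => - f p).
Proof.
move=> [r1 [H1 E1]]; exists (map (fun r => (- r.1, r.2)) r1); split.
  by apply/Forall_map; apply: List.Forall_impl H1.
by move=> p; rewrite big_map E1 -sumrN; apply: eq_bigr => r _ /=; rewrite mulNr.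
Qed.

Lemma relcomb_rel c : tensor_relation X Y R c -> relcomb (fcoef c).
Proof. by move=> H; exists [:: (1, c)]; split=> [|p]; [constructor|rewrite big_seq1 mul1r]. Qed.

(* l1 and l2 represent the same element of X (x)_R Y. *)
Definition teq (l1 l2 : seq (S * M)) : Prop := relcomb (fun p => occ l1 p - occ l2 p).

Lemma teq_tensor_zero l : teq l [::] -> tensor_zero X Y R l.
Proof. by move=> [rels [H E]]; exists rels; split => // p; rewrite -E occ_nil subr0. Qed.

Lemma teq_occ l1 l2 : (forall p, occ l1 p = occ l2 p) -> teq l1 l2.
Proof. by move=> E; apply: relcomb_ext relcomb0 => p; rewrite E subrr. Qed.

Lemma teq_refl l : teq l l. Proof. exact: teq_occ. Qed.

Lemma teq_sym l1 l2 : teq l1 l2 -> teq l2 l1.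
Proof. by move/relcombN; apply: relcomb_ext => p; rewrite opprB. Qed.

Lemma teq_trans l1 l2 l3 : teq l1 l2 -> teq l2 l3 -> teq l1 l3.
Proof. by move=> H1 H2; apply: relcomb_ext (relcombD H1 H2) => p; rewrite addrA subrK. Qed.

Lemma teq_cat l1 l2 l3 l4 : teq l1 l2 -> teq l3 l4 -> teq (l1 ++ l3) (l2 ++ l4).
Proof.
move=> H1 H2; apply: relcomb_ext (relcombD H1 H2) => p.
by rewrite !occ_cat opprD addrACA.
Qed.

Lemma teq_flatten (A : Type) (F F' : A -> seq (S * M)) L :
  (forall a, List.In a L -> teq (F a) (F' a)) ->
  teq (flatten (map F L)) (flatten (map F' L)).
Proof.
elim: L => [|a L IH] H /=; first exact: teq_refl.
by apply: teq_cat; [apply: H; left|apply: IH => b Hb; apply: H; right].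
Qed.

Lemma teq_map (A : Type) (f f' : A -> S * M) L :
  (forall x, List.In x L -> teq [:: f x] [:: f' x]) -> teq (map f L) (map f' L).
Proof. by move=> H; rewrite -(flatten_map1 f) -(flatten_map1 f'); apply: teq_flatten. Qed.

Lemma teq_addl s s' m : X s -> X s' -> Y m -> teq [:: (s + s', m)] [:: (s, m); (s', m)].
Proof.
move=> Hs Hs' Hm; pose c := [:: (1%:Z, (s + s', m)); ((-1)%:~R, (s, m)); ((-1)%:~R, (s', m))].
apply: (@relcomb_ext (fcoef c)); last by apply: relcomb_rel; left; exists s, s', m.
move=> p; rewrite !fcoef_cons fcoef_nil !occ_cons !occ_nil /=.
by do 3!case: (_ == p).
Qed.

Lemma teq_addr s m m' : X s -> Y m -> Y m' -> teq [:: (s, m + m')] [:: (s, m); (s, m')].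
Proof.
move=> Hs Hm Hm'; pose c := [:: (1%:Z, (s, m + m')); ((-1)%:~R, (s, m)); ((-1)%:~R, (s, m'))].
apply: (@relcomb_ext (fcoef c)); last by apply: relcomb_rel; right; left; exists s, m, m'.
move=> p; rewrite !fcoef_cons fcoef_nil !occ_cons !occ_nil /=.
by do 3!case: (_ == p).
Qed.

Lemma teq_bal s r m : X s -> R r -> Y m -> teq [:: (s * r, m)] [:: (s, r *: m)].
Proof.
move=> Hs Hr Hm; pose c := [:: (1%:Z, (s * r, m)); ((-1)%:~R, (s, r *: m))].
apply: (@relcomb_ext (fcoef c)); last by apply: relcomb_rel; right; right; exists s, r, m.
move=> p; rewrite !fcoef_cons fcoef_nil !occ_cons !occ_nil /=.
by do 2!case: (_ == p).
Qed.

Lemma teq_zero_l m : X 0 -> Y m -> teq [:: (0, m)] [::].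
Proof.
move=> H0 Hm; have := relcombN (teq_addl H0 H0 Hm); rewrite addr0.
by apply: relcomb_ext => p; rewrite !occ_cons !occ_nil; case: (_ == p).
Qed.

Lemma teq_zero_r s : X s -> Y 0 -> teq [:: (s, 0)] [::].
Proof.
move=> Hs H0; have := relcombN (teq_addr Hs H0 H0); rewrite addr0.
by apply: relcomb_ext => p; rewrite !occ_cons !occ_nil; case: (_ == p).
Qed.

Lemma teq_suml (T : Type) (F : T -> S) L m : add_subgroup X -> Y m ->
  (forall x, List.In x L -> X (F x)) ->
  teq [:: (\sum_(x <- L) F x, m)] (map (fun x => (F x, m)) L).
Proof.
move=> hX Hm; elim: L => [|x L IH] HL; first by rewrite big_nil; apply: teq_zero_l (asg0 hX) Hm.
have HL' y : List.In y L -> X (F y) by move=> Hy; apply: HL; right.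
rewrite big_cons; apply: teq_trans (teq_addl _ _ Hm) _.
- by apply: HL; left.
- exact: (asg_sum hX HL').
- exact: teq_cat (teq_refl [:: (F x, m)]) (IH HL').
Qed.

Lemma teq_sumr (T : Type) (F : T -> M) L s : add_subgroup Y -> X s ->
  (forall x, List.In x L -> Y (F x)) ->
  teq [:: (s, \sum_(x <- L) F x)] (map (fun x => (s, F x)) L).
Proof.
move=> hY Hs; elim: L => [|x L IH] HL; first by rewrite big_nil; apply: teq_zero_r Hs (asg0 hY).
have HL' y : List.In y L -> Y (F y) by move=> Hy; apply: HL; right.
rewrite big_cons; apply: teq_trans (teq_addr Hs _ _) _.
- by apply: HL; left.
- exact: (asg_sum hY HL').
- exact: teq_cat (teq_refl [:: (s, F x)]) (IH HL').
Qed.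

End FormalSums.

Lemma relcomb_mono (S : pzRingType) (M : lmodType S) (X X' : S -> Prop) (Y : M -> Prop) R f :
  (forall s, X s -> X' s) -> relcomb X Y R f -> relcomb X' Y R f.
Proof.
move=> HX [rels [H E]]; exists rels; split => //; apply: List.Forall_impl H => r.
case=> [[s [s' [m [h1 [h2 [h3 ->]]]]]]|[[s [m [m' [h1 [h2 [h3 ->]]]]]]|[s [r' [m [h1 [h2 [h3 ->]]]]]]]].
- by left; exists s, s', m; auto.
- by right; left; exists s, m, m'; auto.
- by right; right; exists s, r', m; auto.
Qed.

Section GradedModule.
Variables (G : group) (S : pzRingType) (Sg : G -> S -> Prop).
Hypothesis gradedS : graded_ring Sg.
Variables (M : lmodType S) (Mg : G -> M -> Prop).
Hypothesis grM : graded_module Sg Mg.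

Let SgA g : add_subgroup (Sg g) := gradedS.1.1 g.
Let SgM g h x y : Sg g x -> Sg h y -> Sg (gmul g h) (x * y) := @gradedS.2 g h x y.
Let MgA g : add_subgroup (Mg g) := grM.1.1 g.
Let MgM g h x m : Sg g x -> Mg h m -> Mg (gmul g h) (x *: m) := @grM.2 g h x m.

Lemma mult_map_onto g h z :
  prodset *:%R (Sgg Sg g) (Mg (gmul g h)) z -> prodset *:%R (Sg g) (Mg h) z.
Proof.
move: z; apply: (prodset_ind (P := prodset *:%R (Sg g) (Mg h))).
- exact: prodset0.
- exact: prodsetD.
move=> a m Ha Hm; move: a Ha.
apply: (prodset_ind (P := fun a => prodset *:%R (Sg g) (Mg h) (a *: m))).
- by rewrite scale0r; apply: prodset0.
- by move=> u v Hu Hv; rewrite scalerDl; apply: prodsetD.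
- move=> x y Hx Hy; rewrite -scalerA; apply: prodset1 => //.
  by have := MgM Hy Hm; rewrite gmulA gVmul g1mul.
Qed.

(* Every element of S (x)_R M_e is a sum of elements of the S_g (x)_R M_e:
   split each left factor into its homogeneous components. *)
Lemma teq_homog_split (l : seq (S * M)) : List.Forall (fun p => Mg (gunit G) p.2) l ->
  exists l3 : seq (G * (S * M)),
    [/\ List.Forall (fun q => Sg q.1 q.2.1 /\ Mg (gunit G) q.2.2) l3,
        teq (fun _ => True) (Mg (gunit G)) (Sg (gunit G)) l (map snd l3) &
        \sum_(q <- l3) q.2.1 *: q.2.2 = \sum_(p <- l) p.1 *: p.2].
Proof.
elim: l => [|p l IH] Hl.
  by exists [::]; split; [constructor|exact: teq_refl|rewrite !big_nil].
move/List.Forall_cons_iff: Hl => [Hp /IH [l3 [H3 E3 S3]]].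
have [D [HD ED]] := gradedS.1.2.1 p.1.
exists (map (fun q => (q.1, (q.2, p.2))) D ++ l3); split.
- apply/List.Forall_app; split => //; apply/Forall_map.
  by apply: List.Forall_impl HD.
- rewrite map_cat -map_comp -cat1s; apply: teq_cat E3.
  rewrite [in X in teq _ _ _ X](surjective_pairing p) ED.
  by apply: teq_suml => //; split.
- by rewrite big_cat big_map big_cons S3 /= -scaler_suml -ED.
Qed.

Section NearlyEpsilon.
Hypothesis Hi : nearly_eps_strongly Sg.

(* Under (i), s m = a s m with a in S_(g,g^-1): the multiplication map lands
   in S_(g,g^-1) M_(gh). *)
Lemma mult_map_into g h s m : Sg g s -> Mg h m ->
  prodset *:%R (Sgg Sg g) (Mg (gmul g h)) (s *: m).
Proof.
move=> Hs Hm; have [a [Ha Eas]] := (Hi Hs).1.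
by rewrite -Eas -scalerA; apply: prodset1 => //; exact: MgM.
Qed.

(* Inserting a left unit a = sum_j x_j y_j of the s_i:
   sum_i s_i (x) m_i = sum_j sum_i x_j (x) (y_j s_i) m_i in S_g (x)_R M_h. *)
Lemma teq_insert_unit g h (L : seq (S * S)) (l : seq (S * M)) :
  List.Forall (fun q => Sg g q.1 /\ Sg (ginv g) q.2) L ->
  List.Forall (fun p => Sg g p.1 /\ Mg h p.2) l ->
  List.Forall (fun p => (\sum_(q <- L) q.1 * q.2) * p.1 = p.1) l ->
  teq (Sg g) (Mg h) (Sg (gunit G)) l
    (flatten (map (fun q => map (fun p => (q.1, (q.2 * p.1) *: p.2)) l) L)).
Proof.
move=> HL Hl Ha.
pose F (p : S * M) (q : S * S) := (q.1, (q.2 * p.1) *: p.2).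
apply: (@teq_trans _ _ _ _ _ _ (flatten (map (fun p => map (F p) L) l))); last first.
  exact: teq_occ (occ_swap F l L).
rewrite -[X in teq _ _ _ X _]flatten_seq1; apply: teq_flatten => p Hp.
have [Hp1 Hp2] := ForallE Hl Hp.
have Hq q : List.In q L -> Sg g q.1 /\ Sg (gunit G) (q.2 * p.1).
  by case/(ForallE HL) => Hq1 Hq2; split=> //; have := SgM Hq2 Hp1; rewrite gVmul.
have Ep : p = (\sum_(q <- L) q.1 * (q.2 * p.1), p.2).
  under eq_bigr do rewrite mulrA.
  by rewrite -mulr_suml (ForallE Ha Hp) -surjective_pairing.
rewrite {1}Ep.
have HqL q : List.In q L -> Sg g (q.1 * (q.2 * p.1)).
  by move=> /Hq [Hq1 Hq2]; have := SgM Hq1 Hq2; rewrite gmul1.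
apply: teq_trans (teq_suml (Sg (gunit G)) (SgA g) Hp2 HqL) _.
apply: teq_map => q /Hq [Hq1 Hq2]; exact: teq_bal.
Qed.

Lemma mult_map_kernel g h (l : seq (S * M)) :
  List.Forall (fun p => Sg g p.1 /\ Mg h p.2) l -> \sum_(p <- l) p.1 *: p.2 = 0 ->
  teq (Sg g) (Mg h) (Sg (gunit G)) l [::].
Proof.
move=> Hl Hsum.
have Hl1 : List.Forall (Sg g) (map fst l).
  by apply/Forall_map; apply: List.Forall_impl Hl => p [].
have [a [[L [HL Ea]] Ha]] := homog_left_unit gradedS Hi Hl1.
move/Forall_map: Ha; rewrite Ea => Ha.
apply: teq_trans (teq_insert_unit HL Hl Ha) _.
have -> : [::] = flatten (map (fun _ => [::]) L) :> seq (S * M) by elim: (L).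
apply: teq_flatten => q Hq; have [Hq1 Hq2] := ForallE HL Hq.
have Hqp p : List.In p l -> Mg h ((q.2 * p.1) *: p.2).
  by case/(ForallE Hl) => Hp1 Hp2; have := MgM (SgM Hq2 Hp1) Hp2; rewrite gVmul g1mul.
apply: teq_trans (teq_sym (teq_sumr (Sg (gunit G)) (MgA h) Hq1 Hqp)) _.
under eq_bigr do rewrite -scalerA.
by rewrite -scaler_sumr Hsum scaler0; apply: teq_zero_r _ Hq1 (asg0 (MgA h)).
Qed.

(* Under (i), a family of homogeneous tensors s (x) m (m in M_e) with vanishing
   image is zero in S (x)_R M_e: the part of degree g has image in S_g M_e and
   the sum of these is direct, so each part has zero image and is zero in
   S_g (x)_R M_e by [mult_map_kernel]; recurse on the remaining degrees. *)
Lemma homog_family_kernel (l3 : seq (G * (S * M))) :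
  List.Forall (fun q => Sg q.1 q.2.1 /\ Mg (gunit G) q.2.2) l3 ->
  \sum_(q <- l3) q.2.1 *: q.2.2 = 0 ->
  teq (fun _ => True) (Mg (gunit G)) (Sg (gunit G)) (map snd l3) [::].
Proof.
have [n] := ubnP (size l3); elim: n l3 => // n IH [|[k0 p0] t] Hs Hl Hsum.
  exact: teq_refl.
pose l3 := (k0, p0) :: t; pose P := fun q : G * (S * M) => ceq q.1 k0.
pose img := map (fun q : G * (S * M) => (q.1, q.2.1 *: q.2.2)) l3.
have Himg : List.Forall (fun q => Mg q.1 q.2) img.
  apply: ForallI => y /In_map [q [<- Hq]]; have [Hq1 Hq2] := ForallE Hl Hq.
  by have := MgM Hq1 Hq2; rewrite gmul1.
have Hcomp : \sum_(q <- l3 | P q) q.2.1 *: q.2.2 = 0.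
  by have := ids_component0 grM.1 k0 Himg; rewrite !big_map; apply.
have HP : teq (fun _ => True) (Mg (gunit G)) (Sg (gunit G)) (map snd (filter P l3)) [::].
  apply: relcomb_mono (mult_map_kernel (g := k0) _ _) => //.
  - apply/Forall_map; apply: ForallI => q /In_filter [Hq].
    by rewrite /P; case: ceqP => // <- _; exact: ForallE Hl q Hq.
  - by rewrite big_map big_filter.
have HnP : teq (fun _ => True) (Mg (gunit G)) (Sg (gunit G)) (map snd (filter (predC P) l3)) [::].
  apply: IH.
  - by rewrite /= /P; case: ceqP => // _; rewrite size_filter (leq_ltn_trans (count_size _ _)).
  - by apply: ForallI => q /In_filter [Hq _]; exact: ForallE Hl q Hq.
  - by rewrite big_filter; move: Hsum; rewrite (bigID P) /= -/l3 Hcomp add0r.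
apply: teq_trans (teq_cat HP HnP); apply: teq_occ => p.
by rewrite occ_cat !occ_map -/l3 [LHS](bigID P) !big_filter.
Qed.

Lemma tau_kernel (l : seq (S * M)) : List.Forall (fun p => Mg (gunit G) p.2) l ->
  \sum_(p <- l) p.1 *: p.2 = 0 ->
  tensor_zero (fun _ => True) (Mg (gunit G)) (Sg (gunit G)) l.
Proof.
move=> Hl Hsum; have [l3 [H3 E3 S3]] := teq_homog_split Hl.
exact: teq_tensor_zero (teq_trans E3 (homog_family_kernel H3 (etrans S3 Hsum))).
Qed.

End NearlyEpsilon.

(* The image S(M) of tau lies in S M_e, since S_(g,g^-1) M_g lies in S_g M_e. *)
Lemma tau_onto z : SM Sg Mg z -> exists l : seq (S * M),
  List.Forall (fun p => Mg (gunit G) p.2) l /\ z = \sum_(p <- l) p.1 *: p.2.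
Proof.
move=> [L [HL ->]].
suff [l [Hl ->]] : prodset *:%R (fun _ : S => True) (Mg (gunit G)) (\sum_(p <- L) p.2).
  by exists l; split => //; apply: List.Forall_impl Hl => p [].
apply: sum_closed; [exact: prodset0|exact: prodsetD|] => p /(ForallE HL).
rewrite -[X in Mg X]gmul1 => /mult_map_onto.
apply: (prodset_ind (P := prodset *:%R (fun _ : S => True) (Mg (gunit G)))).
- exact: prodset0.
- exact: prodsetD.
- by move=> a b _ Hb; apply: prodset1.
Qed.

End GradedModule.

Section Equivalences.
Variables (G : group) (S : pzRingType) (Sg : G -> S -> Prop).
Hypothesis gradedS : graded_ring Sg.

Lemma i_iii : nearly_eps_strongly Sg -> cond_iii Sg.
Proof.
move=> Hi; split=> [|M Mg grM g h]; first exact: i_s_unital.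
split; [exact: mult_map_into|split; first exact: mult_map_onto].
by move=> l Hl Hsum; apply: teq_tensor_zero; exact: mult_map_kernel.
Qed.

Lemma iii_ii : cond_iii Sg -> cond_ii Sg.
Proof.
move=> [sU H]; split=> // M Mg grM g h z; have [into [onto _]] := H M Mg grM g h.
split; last exact: onto.
apply: prodset_ind; [exact: prodset0|exact: prodsetD|exact: into].
Qed.

(* Taking M = S and h = e in (ii) gives S_g = S_g S_e = S_(g,g^-1) S_g. *)
Lemma ii_i : cond_ii Sg -> nearly_eps_strongly Sg.
Proof.
move=> [sU H]; apply: (to_nearly_eps gradedS) => // g s Hs.
have Hs1 : prodset (V := S^o) *:%R (Sg g) (Sg (gunit G)) s.
  by rewrite -[s]mulr1; apply: (prodset1 (V := S^o)) => //; exact: one_homog.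
by have := (H _ _ (graded_self gradedS) g (gunit G) s).1 Hs1; rewrite gmul1.
Qed.

(* Taking M = S in (iv): s = tau (s (x) 1) lies in S_(g,g^-1) S_g. *)
Lemma iv_i : cond_iv Sg -> nearly_eps_strongly Sg.
Proof.
move=> [sU [H _]]; apply: (to_nearly_eps gradedS) => // g s Hs.
have := (H _ _ (graded_self gradedS)).1 g s 1 Hs (one_homog gradedS).
by rewrite [_ *: _](mulr1 s).
Qed.

(* (i) -> (iv): tau is well defined, onto and injective; naturality is the
   linearity of a graded morphism. *)
Lemma i_iv : nearly_eps_strongly Sg -> cond_iv Sg.
Proof.
move=> Hi; split; first exact: i_s_unital.
split=> [M Mg grM|M N Mg Ng grM grN f _ l _]; last first.
  by rewrite linear_sum; apply: eq_bigr => p _; exact: linearZ.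
split; [|split; [exact: tau_onto|exact: tau_kernel]].
by move=> g s m Hs Hm; have := mult_map_into grM Hi Hs Hm; rewrite gmul1.
Qed.

End Equivalences.

Theorem mainTheorem2 (G : group) (S : pzRingType) (Sg : G -> S -> Prop)
  (gradedS : graded_ring Sg) :
  [<-> nearly_eps_strongly Sg; cond_ii Sg; cond_iii Sg; cond_iv Sg].
Proof.
tfae.
- by move/(i_iii gradedS)/iii_ii.
- by move/(ii_i gradedS)/(i_iii gradedS).
- by move/iii_ii/(ii_i gradedS)/(i_iv gradedS).
- exact: iv_i.
Qed.
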